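(* Let $X=\{1,\dots,n\}$, let $\phi:X\leadsto X$ be a set-valued map which is a surjection (every $j\in X$ belongs to $\phi(i)$ for some $i$), let $T\in\mathbb{N}$ and $I=\{0,1,\dots,T\}$. Let $g:X\to\mathbb{R}$ and $g_0=B_1^T(g)$. Let $U:I\times X\to\mathbb{R}$ be given by $U(k,x_k)=\min\{g_0(x(0))\mid x\in S_\phi(k,x_k)\}$, set $g_T=U(T,\cdot)$, and let $W:I\times X\to\mathbb{R}$ be given by $W(k,x_k)=\max\{g_T(x(T))\mid x\in S_\phi(k,x_k)\}$. Then $U(0,\cdot)=W(0,\cdot)$.
   Context: A trajectory is a map $x:I\to X$ with $x(i+1)\in\phi(x(i))$ for $i=0,\dots,T-1$; $S_\phi(k,x_k)$ is the set of trajectories with $x(k)=x_k$. For $h:X\to\mathbb{R}$, the backward one-step operator is $B_1(h)(i)=\max\{h(j)\mid j\in\phi(i)\}$, and $B_1^T$ is its $T$-fold iterate. *)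

From mathcomp Require Import all_boot all_order all_algebra.
From mathcomp Require Import reals.
Set Implicit Arguments. Unset Strict Implicit. Unset Printing Implicit Defensive.
Import Order.TTheory GRing.Theory Num.Theory.
Local Open Scope ring_scope.

(* Maximum / minimum of f over a finite set A (value 0 if A is empty;
   in the theorem all sets involved are nonempty). *)
Definition fmax (T : finType) (R : realDomainType) (A : {pred T}) (f : T -> R) : R :=
  if [pick x in A] is Some a then \big[Num.max/f a]_(x in A) f x else 0.
Definition fmin (T : finType) (R : realDomainType) (A : {pred T}) (f : T -> R) : R :=
  if [pick x in A] is Some a then \big[Num.min/f a]_(x in A) f x else 0.

Definition is_traj (n T : nat) (phi : 'I_n -> {set 'I_n})
  (x : {ffun 'I_T.+1 -> 'I_n}) : bool :=
  [forall i : 'I_T, x (inord i.+1) \in phi (x (inord i))].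

Definition Straj (n T : nat) (phi : 'I_n -> {set 'I_n}) (k : 'I_T.+1) (xk : 'I_n)
  : {pred {ffun 'I_T.+1 -> 'I_n}} :=
  [pred x | is_traj phi x && (x k == xk)].

Definition B1 (n : nat) (R : realDomainType) (phi : 'I_n -> {set 'I_n})
  (h : 'I_n -> R) : 'I_n -> R :=
  fun i => fmax (mem (phi i)) h.

(** Since every trajectory from [x0] starts at [x0], [U(0, x0) = g0(x0)].
    [B1] propagates maxima backwards, so [g (z T) <= g0 (z 0)] along every
    trajectory [z]; hence [gT >= g] at every endpoint of a trajectory, while
    [gT (z T) <= g0 x0] for trajectories [z] from [x0], because [z] itself
    competes in the minimum defining [gT].  A greedy trajectory from [x0],
    which moves at step [m] to a maximiser of [iter (T - m - 1) (B1 phi) g],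
    keeps the value [g0 x0] and so ends at a point [y] with [g y = g0 x0];
    thus [gT y = g0 x0] and the maximum defining [W(0, x0)] is [g0 x0]. *)
From mathcomp Require Import all_boot all_order all_algebra.
From mathcomp Require Import reals.
Set Implicit Arguments. Unset Strict Implicit. Unset Printing Implicit Defensive.
Import Order.TTheory GRing.Theory Num.Theory.
Local Open Scope ring_scope.

Section FiniteExtrema.
Variables (T : finType) (R : realDomainType) (A : {pred T}) (f : T -> R).

Lemma le_fmax b : b \in A -> f b <= fmax A f.
Proof.
move=> bA; rewrite /fmax; case: pickP => [a aA|/(_ b)]; last by rewrite bA.
by rewrite (bigD1 b) //= le_max lexx.
Qed.

Lemma fmax_le y : (exists a, a \in A) -> (forall a, a \in A -> f a <= y) ->
  fmax A f <= y.
Proof.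
move=> [b bA] le_y; rewrite /fmax; case: pickP => [a aA|/(_ b)]; last by rewrite bA.
elim/big_ind: _ => [|u v uy vy|i iA]; rewrite ?ge_max ?uy ?vy //; exact: le_y.
Qed.

Lemma fmax_attained b : b \in A -> exists2 a, a \in A & fmax A f = f a.
Proof.
move=> bA; rewrite /fmax; case: pickP => [a aA|/(_ b)]; last by rewrite bA.
elim/big_ind: _ => [|u v [c cA ->] [d dA ->]|i iA]; [by exists a | | by exists i].
by case: (leP (f c) (f d)) => _; [exists d | exists c].
Qed.

Lemma fmax_eq b : b \in A -> (forall a, a \in A -> f a <= f b) -> fmax A f = f b.
Proof. by move=> bA le_b; apply/le_anti; rewrite le_fmax // fmax_le //; exists b. Qed.

Lemma fmin_le b : b \in A -> fmin A f <= f b.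
Proof.
move=> bA; rewrite /fmin; case: pickP => [a aA|/(_ b)]; last by rewrite bA.
by rewrite (bigD1 b) //= ge_min lexx.
Qed.

Lemma le_fmin y : (exists a, a \in A) -> (forall a, a \in A -> y <= f a) ->
  y <= fmin A f.
Proof.
move=> [b bA] ge_y; rewrite /fmin; case: pickP => [a aA|/(_ b)]; last by rewrite bA.
elim/big_ind: _ => [|u v yu yv|i iA]; rewrite ?le_min ?yu ?yv //; exact: ge_y.
Qed.

Lemma fmin_eq b : b \in A -> (forall a, a \in A -> f b <= f a) -> fmin A f = f b.
Proof. by move=> bA ge_b; apply/le_anti; rewrite fmin_le // le_fmin //; exists b. Qed.

End FiniteExtrema.

Section Trajectories.
Variables (R : realDomainType) (n : nat) (phi : 'I_n -> {set 'I_n}).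

Lemma le_B1 (h : 'I_n -> R) i j : j \in phi i -> h j <= B1 phi h i.
Proof. exact: le_fmax. Qed.

Variables (T : nat) (g : 'I_n -> R).
Local Notation gB m := (iter m (B1 phi) g).

Lemma traj_iter_B1_le (z : {ffun 'I_T.+1 -> 'I_n}) : is_traj phi z ->
  forall m, (m <= T)%N -> gB (T - m) (z (inord m)) <= gB T (z ord0).
Proof.
move=> /forallP z_traj; elim=> [|m IHm] le_mT.
  by rewrite subn0 (_ : inord 0 = ord0) //; apply: val_inj; rewrite /= inordK.
apply: le_trans (IHm (ltnW le_mT)).
rewrite -(subnSK le_mT); apply: le_B1; exact: z_traj (Ordinal le_mT).
Qed.

Lemma traj_end_le (z : {ffun 'I_T.+1 -> 'I_n}) : is_traj phi z ->
  g (z ord_max) <= gB T (z ord0).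
Proof.
move=> z_traj; have := traj_iter_B1_le z_traj (leqnn T).
by rewrite subnn (_ : inord T = ord_max) //; apply: val_inj; rewrite /= inordK.
Qed.

Hypothesis phi_ne : forall i, phi i != set0.

Definition greedy_succ (h : 'I_n -> R) i :=
  odflt i [pick j in phi i | h j == B1 phi h i].

Lemma greedy_succP h i :
  greedy_succ h i \in phi i /\ h (greedy_succ h i) = B1 phi h i.
Proof.
have [b b_phi] := set0Pn _ (phi_ne i).
have [a a_phi ha] := fmax_attained h b_phi.
rewrite /greedy_succ; case: pickP => [j /andP[j_phi /eqP ->]|/(_ a)] //.
by rewrite a_phi /B1 ha eqxx.
Qed.

Fixpoint greedy_path x0 m :=
  if m is m'.+1 then greedy_succ (gB (T - m)) (greedy_path x0 m') else x0.

Lemma greedy_path_value x0 m : (m <= T)%N ->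
  gB (T - m) (greedy_path x0 m) = gB T x0.
Proof.
elim: m => [|m IHm] le_mT; first by rewrite subn0.
by rewrite /= (greedy_succP _ _).2 -iterS subnSK // IHm // ltnW.
Qed.

Lemma optimal_traj_exists x0 : exists X : {ffun 'I_T.+1 -> 'I_n},
  [/\ is_traj phi X, X ord0 = x0 & g (X ord_max) = gB T x0].
Proof.
exists [ffun i : 'I_T.+1 => greedy_path x0 i]; split; rewrite ?ffunE //.
  apply/forallP => i; rewrite !ffunE !inordK ?ltnS ?(ltnW (ltn_ord i)) //.
  exact: (greedy_succP _ _).1.
by rewrite -(greedy_path_value x0 (leqnn T)) subnn.
Qed.

End Trajectories.

Theorem proposition5p1 (R : realType) (n T : nat) (phi : 'I_n -> {set 'I_n})
  (phi_ne : forall i, phi i != set0)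
  (phi_surj : forall j, exists i, j \in phi i)
  (g : 'I_n -> R) :
  let g0 := iter T (B1 phi) g in
  let U := fun (k : 'I_T.+1) (xk : 'I_n) =>
             fmin (Straj phi k xk) (fun x => g0 (x ord0)) in
  let gT := U ord_max in
  let W := fun (k : 'I_T.+1) (xk : 'I_n) =>
             fmax (Straj phi k xk) (fun x => gT (x ord_max)) in
  forall x0 : 'I_n, U ord0 x0 = W ord0 x0.
Proof.
move=> g0 U gT W x0.
have [X [X_traj X0 XT]] := optimal_traj_exists T g phi_ne x0.
have in_Straj (z : {ffun 'I_T.+1 -> 'I_n}) k :
    is_traj phi z -> z \in Straj phi k (z k).
  by move=> z_traj; rewrite inE z_traj eqxx.
have Straj0 (z : {ffun 'I_T.+1 -> 'I_n}) :
    z \in Straj phi ord0 x0 -> is_traj phi z /\ z ord0 = x0.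
  by rewrite inE => /andP[-> /eqP].
have X_S : X \in Straj phi ord0 x0 by rewrite -X0 in_Straj.
have U0 : U ord0 x0 = g0 x0.
  by rewrite /U (fmin_eq X_S) ?X0 // => z /Straj0[_ ->].
have gT_le (z : {ffun 'I_T.+1 -> 'I_n}) :
    z \in Straj phi ord0 x0 -> gT (z ord_max) <= g0 x0.
  by move=> /Straj0[z_traj <-]; rewrite /gT /U; apply: fmin_le; exact: in_Straj.
have gT_X : gT (X ord_max) = g0 x0.
  apply/le_anti; rewrite gT_le //= /gT /U.
  apply: le_fmin => [|w]; first by exists X; exact: in_Straj.
  rewrite inE => /andP[w_traj /eqP wT].
  by rewrite /g0 -XT -wT; exact: traj_end_le.
by rewrite U0 /W (fmax_eq X_S) gT_X // => z /gT_le; rewrite gT_X.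
Qed.
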